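(* Let $\ell\in\{0,1,2,3\}$, $M,H\in\mathbb N$ and $p\in X_\ell$. Then there is a set $\Lambda\subseteq\mathbb N$ such that (1) $\lim_{N\to\infty}\frac1N\#(\{1,\dots,N\}\cap\Lambda)=1$, and (2) for every $n\in\Lambda$, the truncation $[T^{n+h}p]_M$ is the same for all $0\le h\le H-1$.
   Context: Fix integers $2\le q_1<q_2<\cdots$ such that $q_{k+1}>q_k^4+3q_k$ for every $k\ge1$. For $k\ge1$ put $q^{(0)}_k=q_{2k}$, $q^{(1)}_k=q_{2k+1}$, $q^{(2)}_k=q^{(0)}_k-1$, $q^{(3)}_k=q^{(1)}_k-1$, and $L^{(i)}_k=\lfloor q^{(i)}_{k+1}/(3q^{(i)}_k)\rfloor$. Let $s^{(i)}_k\in\{-1,0,1\}^{\mathbb N}$ (indices $n\ge1$) be given by $s^{(i)}_k(n)=1$ if $n=jq^{(i)}_k$ with $1\le j\le L^{(i)}_k$, $s^{(i)}_k(n)=-1$ if $n=jq^{(i)}_k$ with $L^{(i)}_k<j\le2L^{(i)}_k$, and $s^{(i)}_k(n)=0$ otherwise. For $w\in\{-1,0,1\}^{\mathbb N}$ and $p\in\mathbb N_0$ let $\sigma^{-p}w$ be defined by $(\sigma^{-p}w)(n)=0$ for $1\le n\le p$ and $(\sigma^{-p}w)(n)=w(n-p)$ for $n>p$. For $l\le m$ write $w|_l^m=(w_l,\dots,w_m)$. Let $R^{(i)}_k=\{(\sigma^{-p}s^{(i)}_k)|_{q^{(i)}_k}^{q^{(i)}_{k+1}-1}:p=0,1,\dots,q^{(i)}_k\}$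 and $P^{(i)}=\{y\in\{-1,0,1\}^{\mathbb N}: y(n)=0\text{ for }1\le n<q^{(i)}_1,\ y|_{q^{(i)}_k}^{q^{(i)}_{k+1}-1}\in R^{(i)}_k\text{ for all }k\ge1\}$. Let $Z=\{-1,0,1\}^{\mathbb N}\times\{-1,0,1\}^{\mathbb Z}$, where each factor carries the metric $d(u,v)=3^{-\min\{|m|:u_m\neq v_m\}}$ and $Z$ the maximum of the two. $\sigma$ is the left shift $(\sigma u)_m=u_{m+1}$ (invertible on $\{-1,0,1\}^{\mathbb Z}$). Define $T:Z\to Z$, $T(y,z)=(\sigma y,\sigma^{y_1}z)$, and $X_i=\overline{\bigcup_{n\ge0}T^n(P^{(i)}\times\{-1,0,1\}^{\mathbb Z})}$ for $i\in\{0,1,2,3\}$. For $p=(y,z)\in Z$ and $M\in\mathbb N$, $[p]_M=((y_1,\dots,y_M),(z_{-M},\dots,z_M))$. *)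

From Stdlib Require Import Bool Arith ZArith Reals List Lia.
Import ListNotations.

(* The fixed sequence q_1 < q_2 < ... is a function q : nat -> nat,
   only its values at indices k >= 1 matter. *)
Definition admissible_q (q : nat -> nat) : Prop :=
  2 <= q 1 /\
  (forall k, 1 <= k -> q k < q (k + 1)) /\
  (forall k, 1 <= k -> q (k + 1) > q k ^ 4 + 3 * q k).

Definition qi (q : nat -> nat) (i k : nat) : nat :=
  match i with
  | 0 => q (2 * k)
  | 1 => q (2 * k + 1)
  | 2 => q (2 * k) - 1
  | _ => q (2 * k + 1) - 1
  end.

Definition Lk (q : nat -> nat) (i k : nat) : nat :=
  qi q i (k + 1) / (3 * qi q i k).

(* Sequences y in {-1,0,1}^N are functions nat -> Z, indices n >= 1
   (the value at index 0 is irrelevant and never used). *)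
Definition sk (q : nat -> nat) (i k : nat) (n : nat) : Z :=
  let Q := qi q i k in
  let L := Lk q i k in
  if ((1 <=? n) && (n mod Q =? 0) && (1 <=? n / Q) && (n / Q <=? L))%bool then 1%Z
  else if ((1 <=? n) && (n mod Q =? 0) && (L <? n / Q) && (n / Q <=? 2 * L))%bool then (-1)%Z
  else 0%Z.

Definition shiftR (p : nat) (w : nat -> Z) (n : nat) : Z :=
  if n <=? p then 0%Z else w (n - p).

Definition inR (q : nat -> nat) (i k : nat) (y : nat -> Z) : Prop :=
  exists p, p <= qi q i k /\
    forall n, qi q i k <= n <= qi q i (k + 1) - 1 ->
      y n = shiftR p (sk q i k) n.

Definition inP (q : nat -> nat) (i : nat) (y : nat -> Z) : Prop :=
  (forall n, 1 <= n < qi q i 1 -> y n = 0%Z) /\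
  (forall k, 1 <= k -> inR q i k y).

Definition in3 (a : Z) : Prop := a = (-1)%Z \/ a = 0%Z \/ a = 1%Z.

Definition pt : Type := ((nat -> Z) * (Z -> Z))%type.

Definition inZspace (p : pt) : Prop :=
  (forall n, 1 <= n -> in3 (fst p n)) /\ (forall m, in3 (snd p m)).

Definition Tmap (p : pt) : pt :=
  (fun n => fst p (n + 1), fun m => snd p (m + fst p 1%nat)%Z).

Definition trunc (M : nat) (p : pt) : list Z * list Z :=
  (map (fst p) (seq 1 M),
   map (fun k => snd p (Z.of_nat k - Z.of_nat M)%Z) (seq 0 (2 * M + 1))).

Definition orbitSet (q : nat -> nat) (i : nat) (x : pt) : Prop :=
  exists n y z, inP q i y /\ (forall m, in3 (z m)) /\ x = Nat.iter n Tmap (y, z).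

(* closure in Z: the metric balls of radius 3^{-M} around p are exactly the
   points with the same truncation [.]_M *)
Definition Xset (q : nat -> nat) (i : nat) (p : pt) : Prop :=
  inZspace p /\
  forall M, exists x, orbitSet q i x /\ trunc M x = trunc M p.

Definition countUpTo (Lam : nat -> bool) (N : nat) : nat :=
  length (filter Lam (seq 1 N)).

(* The first coordinate y of a point of X_l has a support whose gaps tend to
   infinity.  For a point of P^(l) the non-zero entries in the block
   [q_k, q_(k+1)) sit on a progression of step q_k, and the growth
   q_(k+1) > q_k^4 + 3 q_k leaves a gap of at least q_k before the next block;
   this survives the orbit closure because [.]_M only sees finitely many
   coordinates.  Since T moves z by the partial sums of y, [T^(n+h) p]_M does
   not depend on h < H once y vanishes on n+1, ..., n+M+H, and a support with
   gaps tending to infinity leaves such windows at density one. *)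

From Stdlib Require Import Arith ZArith Reals List Lia Lra.

Local Open Scope bool_scope.

(** * The dynamics of T *)

Fixpoint prefix_sum (y : nat -> Z) (t : nat) : Z :=
  match t with 0 => 0%Z | S t' => (prefix_sum y t' + y (S t'))%Z end.

Lemma iter_Tmap_fst t (p : pt) j : fst (Nat.iter t Tmap p) j = fst p (j + t).
Proof.
  revert j; induction t as [|t IH]; intros j; simpl.
  - now rewrite Nat.add_0_r.
  - rewrite IH. f_equal. lia.
Qed.

Lemma iter_Tmap_snd t (p : pt) m :
  snd (Nat.iter t Tmap p) m = snd p (m + prefix_sum (fst p) t)%Z.
Proof.
  revert m; induction t as [|t IH]; intros m; simpl.
  - now rewrite Z.add_0_r.
  - rewrite IH, iter_Tmap_fst. f_equal. simpl. lia.
Qed.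

Lemma prefix_sum_stable y n h :
  (forall i, 1 <= i <= h -> y (n + i) = 0%Z) -> prefix_sum y (n + h) = prefix_sum y n.
Proof.
  induction h as [|h IH]; intros Hz.
  - now rewrite Nat.add_0_r.
  - rewrite Nat.add_succ_r. simpl.
    rewrite IH by (intros; apply Hz; lia).
    replace (S (n + h)) with (n + S h) by lia. rewrite Hz by lia. ring.
Qed.

Lemma trunc_iter_stable M (p : pt) n h :
  (forall j, 1 <= j <= M + h -> fst p (n + j) = 0%Z) ->
  trunc M (Nat.iter (n + h) Tmap p) = trunc M (Nat.iter n Tmap p).
Proof.
  intros Hz. unfold trunc. f_equal.
  - apply map_ext_in. intros j Hj. apply in_seq in Hj.
    rewrite !iter_Tmap_fst.
    replace (j + (n + h)) with (n + (j + h)) by lia. replace (j + n) with (n + j) by lia.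
    rewrite !Hz by lia. reflexivity.
  - apply map_ext. intros k.
    rewrite !iter_Tmap_snd, prefix_sum_stable by (intros; apply Hz; lia).
    reflexivity.
Qed.

Lemma trunc_fst M (a b : pt) j :
  trunc M a = trunc M b -> 1 <= j <= M -> fst a j = fst b j.
Proof.
  intros Hab Hj. apply (f_equal fst) in Hab.
  apply (ext_in_map Hab), in_seq. lia.
Qed.

(** * Counting in windows *)

Definition sparse (f : nat -> bool) : Prop :=
  forall D, exists m0, forall m m', m0 <= m -> m < m' ->
    f m = true -> f m' = true -> m + D <= m'.

Definition support (y : nat -> Z) (m : nat) : bool := negb (y m =? 0)%Z.

Definition window_clear (f : nat -> bool) (K n : nat) : bool :=
  (1 <=? n) && forallb (fun j => negb (f (n + j))) (seq 1 K).

Lemma window_clear_support y K n j :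
  window_clear (support y) K n = true -> 1 <= j <= K -> y (n + j) = 0%Z.
Proof.
  unfold window_clear, support. rewrite Bool.andb_true_iff, forallb_forall.
  intros [_ Hw] Hj. specialize (Hw j (proj2 (in_seq K 1 j) ltac:(lia))).
  rewrite Bool.negb_involutive in Hw. now apply Z.eqb_eq.
Qed.

Lemma count_orb_le {A} (g h : A -> bool) l :
  length (filter (fun x => g x || h x) l) <= length (filter g l) + length (filter h l).
Proof. induction l as [|a l IH]; simpl; [lia|]. destruct (g a), (h a); simpl; lia. Qed.

Lemma count_bounded_le (f : nat -> bool) B a N :
  (forall x, f x = true -> x < B) -> length (filter f (seq a N)) <= B.
Proof.
  intros Hf. rewrite <- (length_seq B 0). apply NoDup_incl_length.
  - apply NoDup_filter, seq_NoDup.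
  - intros x Hx. apply filter_In in Hx as [_ Hx]. apply in_seq. apply Hf in Hx. lia.
Qed.

Section Gaps.
Variables (f : nat -> bool) (D : nat).
Hypothesis gap : forall x y, f x = true -> f y = true -> x < y -> x + D <= y.

Lemma count_short_window_le a N : N <= D -> length (filter f (seq a N)) <= 1.
Proof.
  intros HN.
  assert (Hin : forall x, In x (filter f (seq a N)) -> f x = true /\ a <= x < a + N).
  { intros x Hx. apply filter_In in Hx as [Hx Hfx]. apply in_seq in Hx. auto. }
  pose proof (NoDup_filter f (seq_NoDup N a)) as Hnd.
  destruct (filter f (seq a N)) as [|x [|y r]]; simpl; try lia.
  exfalso. inversion Hnd as [|? ? Hx _]; subst.
  destruct (Hin x ltac:(simpl; auto)) as [fx bx], (Hin y ltac:(simpl; auto)) as [fy By].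
  assert (x <> y) by (intros ->; apply Hx; simpl; auto).
  destruct (lt_dec x y) as [Hxy|Hxy].
  - pose proof (gap x y fx fy Hxy). lia.
  - pose proof (gap y x fy fx ltac:(lia)). lia.
Qed.

Lemma count_window_le : 1 <= D -> forall N a, length (filter f (seq a N)) <= N / D + 1.
Proof.
  intros HD N. induction N as [N IH] using (well_founded_induction lt_wf). intros a.
  destruct (le_lt_dec N D) as [HN|HN].
  - pose proof (count_short_window_le a N HN). lia.
  - replace N with (D + (N - D)) by lia. rewrite seq_app, filter_app, length_app.
    pose proof (count_short_window_le a D (Nat.le_refl D)).
    pose proof (IH (N - D) ltac:(lia) (a + D)).
    replace (D + (N - D)) with ((N - D) + 1 * D) by lia. rewrite Nat.div_add by lia. lia.
Qed.
End Gaps.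

Lemma sparse_count_le f D : sparse f -> 1 <= D ->
  exists C, forall a N, length (filter f (seq a N)) <= N / D + C.
Proof.
  intros Hf HD. destruct (Hf D) as [m0 Hm0]. exists (m0 + 1). intros a N.
  rewrite (filter_ext f (fun x => f x && (m0 <=? x) || f x && negb (m0 <=? x))) by
    (intros x; now destruct (f x), (m0 <=? x)).
  eapply Nat.le_trans; [apply count_orb_le|].
  pose proof (count_window_le (fun x => f x && (m0 <=? x)) D) as Hlate.
  pose proof (count_bounded_le (fun x => f x && negb (m0 <=? x)) m0 a N) as Hearly.
  enough (length (filter (fun x => f x && (m0 <=? x)) (seq a N)) <= N / D + 1
        /\ length (filter (fun x => f x && negb (m0 <=? x)) (seq a N)) <= m0) by lia.
  split.
  - apply Hlate; auto. intros x y Hx Hy Hxy.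
    apply andb_prop in Hx as [Hx Hxm], Hy as [Hy _]. apply Nat.leb_le in Hxm.
    exact (Hm0 x y Hxm Hxy Hx Hy).
  - apply Hearly. intros x Hx. apply andb_prop in Hx as [_ Hx].
    now apply Bool.negb_true_iff, Nat.leb_gt in Hx.
Qed.

Lemma count_existsb_le (h : nat -> nat -> bool) J l c :
  (forall j, In j J -> length (filter (h j) l) <= c) ->
  length (filter (fun n => existsb (fun j => h j n) J) l) <= length J * c.
Proof.
  induction J as [|j J IH]; intros Hc; simpl.
  - clear Hc. induction l; simpl; auto.
  - eapply Nat.le_trans; [apply (count_orb_le (h j))|].
    pose proof (Hc j (or_introl eq_refl)). pose proof (IH (fun i Hi => Hc i (or_intror Hi))). lia.
Qed.

Lemma count_shift (f : nat -> bool) j N a :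
  length (filter (fun n => f (n + j)) (seq a N)) = length (filter f (seq (a + j) N)).
Proof.
  revert a; induction N as [|N IH]; intros a; simpl; auto.
  destruct (f (a + j)); simpl; rewrite IH; auto.
Qed.

Lemma window_clear_complement_le f K : sparse f -> 1 <= K ->
  forall D, 1 <= D -> exists C, forall N,
    D * (N - countUpTo (window_clear f K) N) <= N + C.
Proof.
  intros Hf HK D HD. destruct (sparse_count_le f (K * D) Hf ltac:(nia)) as [C HC].
  exists (D * K * C). intros N.
  pose proof (filter_length (window_clear f K) (seq 1 N)) as Hsplit.
  rewrite length_seq in Hsplit. unfold countUpTo.
  assert (Hbad : length (filter (fun n => negb (window_clear f K n)) (seq 1 N))
                 <= K * (N / (K * D) + C)).
  { rewrite (filter_ext_in _ (fun n => existsb (fun j => f (n + j)) (seq 1 K))).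
    - rewrite <- (length_seq K 1) at 1. apply (count_existsb_le (fun j n => f (n + j))).
      intros j _. rewrite count_shift. apply HC.
    - intros n Hn. apply in_seq in Hn. unfold window_clear.
      replace (1 <=? n) with true by (symmetry; apply Nat.leb_le; lia). simpl.
      induction (seq 1 K) as [|j js IH]; simpl; auto.
      rewrite Bool.negb_andb, Bool.negb_involutive, IH. reflexivity. }
  pose proof (Nat.Div0.mul_div_le N (K * D)). nia.
Qed.

Section Density.
Local Open Scope R_scope.

Lemma density_one_of_small_complement (Lam : nat -> bool) :
  (forall D, (1 <= D)%nat -> exists C,
     forall N, (D * (N - countUpTo Lam N) <= N + C)%nat) ->
  Un_cv (fun N => INR (countUpTo Lam N) / INR N) 1.
Proof.
  intros Hc eps Heps.
  destruct (INR_archimed eps 2 Heps) as [d Hd].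
  destruct (Hc (S d) ltac:(lia)) as [C HC].
  exists (S C). intros N HN. unfold R_dist.
  set (cnt := countUpTo Lam N) in *.
  assert (Hcnt : (cnt <= N)%nat).
  { unfold cnt, countUpTo. rewrite <- (length_seq N 1) at 2. apply filter_length_le. }
  assert (HR : INR (S d) * (INR N - INR cnt) <= INR N + INR C).
  { rewrite <- minus_INR, <- mult_INR, <- plus_INR by lia. apply le_INR, HC. }
  assert (HCN : INR C < INR N) by (apply lt_INR; lia).
  assert (Hde : 2 < INR (S d) * eps) by (pose proof (le_INR d (S d) ltac:(lia)); nra).
  assert (HN0 : 0 < INR N) by (apply lt_0_INR; lia).
  assert (Hle : INR cnt <= INR N) by (apply le_INR; lia).
  set (r := INR cnt / INR N).
  assert (Hr : INR cnt = r * INR N) by (unfold r; field; lra).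
  rewrite Hr in HR, Hle. apply Rabs_def1; nra.
Qed.
End Density.

(** * Sparseness of the support on P^(l) and X_l *)

Lemma sk_neq0 q i k n : sk q i k n <> 0%Z ->
  exists j, 1 <= j <= 2 * Lk q i k /\ n = qi q i k * j.
Proof.
  unfold sk; cbv zeta. set (Q := qi q i k). set (L := Lk q i k). intros Hs.
  pose proof (Nat.div_mod_eq n Q) as Hdiv. exists (n / Q).
  destruct ((1 <=? n) && (n mod Q =? 0) && (1 <=? n / Q) && (n / Q <=? L))%bool eqn:E1.
  { rewrite !Bool.andb_true_iff, !Nat.leb_le, Nat.eqb_eq in E1. lia. }
  destruct ((1 <=? n) && (n mod Q =? 0) && (L <? n / Q) && (n / Q <=? 2 * L))%bool eqn:E2.
  { rewrite !Bool.andb_true_iff, !Nat.leb_le, Nat.eqb_eq, Nat.ltb_lt in E2. lia. }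
  contradiction.
Qed.

Lemma shiftR_neq0 p w n : shiftR p w n <> 0%Z -> p < n /\ w (n - p) <> 0%Z.
Proof.
  unfold shiftR. destruct (n <=? p) eqn:E; [contradiction|].
  apply Nat.leb_gt in E. auto.
Qed.

Lemma Lk_bound q i k : 3 * qi q i k * Lk q i k <= qi q i (k + 1).
Proof. unfold Lk. apply Nat.Div0.mul_div_le. Qed.

Section Growth.
Variable q : nat -> nat.
Hypothesis Hq : admissible_q q.
Variable l : nat.
Local Notation Q := (qi q l).

Lemma q_ge k : 1 <= k -> k + 1 <= q k.
Proof.
  destruct Hq as [H1 [H2 _]]. intros Hk.
  induction Hk as [|k Hk IH]; [lia|]. specialize (H2 k Hk). rewrite Nat.add_1_r in H2. lia.
Qed.

Lemma q_step k : 1 <= k -> q k ^ 4 + 3 * q k <= q (k + 2) - 1.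
Proof.
  destruct Hq as [_ [H2 H3]]. intros Hk.
  pose proof (H3 (k + 1) ltac:(lia)) as A. replace (k + 1 + 1) with (k + 2) in A by lia.
  pose proof (H2 k Hk).
  assert (q k ^ 4 <= q (k + 1) ^ 4) by (apply Nat.pow_le_mono_l; lia).
  lia.
Qed.

Lemma Q_ge k : 1 <= k -> 2 * k <= Q k.
Proof.
  intros Hk. pose proof (q_ge (2 * k) ltac:(lia)). pose proof (q_ge (2 * k + 1) ltac:(lia)).
  unfold qi. destruct l as [|[|[|]]]; lia.
Qed.

Lemma Q_succ_ge k : 1 <= k -> Q k ^ 4 + 3 * Q k <= Q (k + 1).
Proof.
  intros Hk. unfold qi.
  replace (2 * (k + 1) + 1) with (2 * k + 1 + 2) by lia.
  replace (2 * (k + 1)) with (2 * k + 2) by lia.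
  pose proof (q_step (2 * k) ltac:(lia)). pose proof (q_step (2 * k + 1) ltac:(lia)).
  assert ((q (2 * k) - 1) ^ 4 <= q (2 * k) ^ 4) by (apply Nat.pow_le_mono_l; lia).
  assert ((q (2 * k + 1) - 1) ^ 4 <= q (2 * k + 1) ^ 4) by (apply Nat.pow_le_mono_l; lia).
  destruct l as [|[|[|]]]; lia.
Qed.

Lemma Q_lt_succ k : 1 <= k -> Q k < Q (k + 1).
Proof.
  intros Hk. pose proof (Q_succ_ge k Hk). pose proof (Q_ge k Hk).
  assert (Q k <= Q k ^ 4) by (rewrite <- (Nat.pow_1_r (Q k)) at 1; apply Nat.pow_le_mono_r; lia).
  lia.
Qed.

Lemma Q_le k k' : 1 <= k -> k <= k' -> Q k <= Q k'.
Proof.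
  intros Hk Hkk'. induction Hkk' as [|k' Hkk' IH]; [lia|].
  pose proof (Q_lt_succ k' ltac:(lia)). rewrite Nat.add_1_r in *. lia.
Qed.

Lemma Q_block m : Q 1 <= m -> exists k, 1 <= k /\ Q k <= m < Q (k + 1).
Proof.
  intros Hm.
  enough (Hind : forall t, m < Q (t + 1) -> exists k, 1 <= k /\ Q k <= m < Q (k + 1)).
  { apply (Hind m). pose proof (Q_ge (m + 1) ltac:(lia)). lia. }
  induction t as [|t IH]; intros Ht; [simpl in Ht; lia|].
  destruct (lt_dec m (Q (t + 1))) as [Hlt|Hge]; [now apply IH|].
  exists (t + 1). rewrite <- Nat.add_1_r in Ht. split; lia.
Qed.

Lemma block_support_fits k : 1 <= k -> Q k * (2 * Lk q l k + 2) <= Q (k + 1).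
Proof.
  intros Hk. pose proof (Lk_bound q l k). pose proof (Q_succ_ge k Hk). pose proof (Q_ge k Hk).
  set (A := Q k) in *. set (B := Q (k + 1)) in *. set (L := Lk q l k) in *.
  assert (8 * A <= A ^ 4).
  { change (A ^ 4) with (A * (A * (A * (A * 1)))). rewrite Nat.mul_1_r.
    assert (4 <= A * A) by nia. assert (8 <= A * (A * A)) by nia. nia. }
  nia.
Qed.

Lemma inR_support k y : inR q l k y -> exists p, p <= Q k /\
  forall m, Q k <= m <= Q (k + 1) - 1 -> y m <> 0%Z ->
    exists j, 1 <= j <= 2 * Lk q l k /\ m = p + Q k * j.
Proof.
  intros [p [Hp Hy]]. exists p. split; [exact Hp|]. intros m Hm Hnz.
  rewrite Hy in Hnz by exact Hm.
  apply shiftR_neq0 in Hnz as [Hpm Hnz]. apply sk_neq0 in Hnz as [j [Hj Hmj]].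
  exists j. split; [exact Hj | lia].
Qed.

Lemma inP_support_gap y k m m' : inP q l y -> 1 <= k -> Q k <= m -> m < m' ->
  y m <> 0%Z -> y m' <> 0%Z -> m + Q k <= m'.
Proof.
  intros [_ HR] Hk Hm Hmm' Hnz Hnz'.
  pose proof (Q_le 1 k ltac:(lia) Hk).
  destruct (Q_block m ltac:(lia)) as [k0 [Hk0 [Hk0m Hmk0]]].
  destruct (Q_block m' ltac:(lia)) as [k1 [Hk1 [Hk1m Hmk1]]].
  assert (Hkk0 : k <= k0).
  { destruct (le_lt_dec k k0) as [|Hlt]; auto.
    pose proof (Q_le (k0 + 1) k ltac:(lia) ltac:(lia)). lia. }
  assert (Hk01 : k0 <= k1).
  { destruct (le_lt_dec k0 k1) as [|Hlt]; auto.
    pose proof (Q_le (k1 + 1) k0 ltac:(lia) ltac:(lia)). lia. }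
  pose proof (Q_le k k0 Hk Hkk0).
  destruct (inR_support k0 y (HR k0 Hk0)) as [p [Hp Hsupp]].
  destruct (Hsupp m ltac:(lia) Hnz) as [j [Hj Hmj]].
  destruct (Nat.eq_dec k0 k1) as [<-|Hne].
  - destruct (Hsupp m' ltac:(lia) Hnz') as [j' [_ Hmj']].
    assert (j < j') by nia. nia.
  - pose proof (Q_le (k0 + 1) k1 ltac:(lia) ltac:(lia)).
    pose proof (block_support_fits k0 Hk0). nia.
Qed.

Lemma Xset_support_sparse p : Xset q l p -> sparse (support (fst p)).
Proof.
  intros [_ Happrox] D. exists (Q (D + 1)).
  intros m m' Hm Hmm' Hnz Hnz'. unfold support in Hnz, Hnz'.
  apply Bool.negb_true_iff, Z.eqb_neq in Hnz, Hnz'.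
  pose proof (Q_ge (D + 1) ltac:(lia)).
  destruct (Happrox m') as [x [[n [y [z [Hy [_ ->]]]]] Htr]].
  rewrite <- (trunc_fst _ _ _ m Htr), iter_Tmap_fst in Hnz by lia.
  rewrite <- (trunc_fst _ _ _ m' Htr), iter_Tmap_fst in Hnz' by lia.
  pose proof (inP_support_gap y (D + 1) (m + n) (m' + n) Hy ltac:(lia) ltac:(lia)
                ltac:(lia) Hnz Hnz').
  lia.
Qed.
End Growth.

Theorem mainTheorem11 (q : nat -> nat) (Hq : admissible_q q)
  (l : nat) (Hl : l <= 3) (M H : nat) (HM : 1 <= M) (HH : 1 <= H)
  (p : pt) (Hp : Xset q l p) :
  exists Lam : nat -> bool,
    Lam 0 = false /\
    Un_cv (fun N => (INR (countUpTo Lam N) / INR N)%R) 1%R /\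
    (forall n, Lam n = true ->
       forall h, h <= H - 1 ->
         trunc M (Nat.iter (n + h) Tmap p) = trunc M (Nat.iter n Tmap p)).
Proof.
  exists (window_clear (support (fst p)) (M + H)).
  split; [reflexivity|]. split.
  - apply density_one_of_small_complement, window_clear_complement_le; [|lia].
    exact (Xset_support_sparse q Hq l p Hp).
  - intros n Hn h Hh. apply trunc_iter_stable. intros j Hj.
    apply (window_clear_support _ (M + H) n); [exact Hn | lia].
Qed.
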